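(* Let $R$ be a commutative ring and work with non-negatively graded chain complexes of $R$-modules. Then: (i) Every chain complex is $S^0$-cellular. (ii) If $X$ is acyclic (all homology groups vanish), then $X \gg A$ for every chain complex $A$. (iii) For every chain complex $A$, the collection $\mathcal{C}(A)$ is closed under retracts. (iv) Suppose $A$ is a cofibrant chain complex. If $X \gg A$ and $H_0(A) \neq 0$, then there exist a set $I$ and a chain map $f\colon \bigoplus_{I} A \to X$ such that $H_0(f)$ is surjective. (v) If $X \gg A$, then $\Sigma^n X \gg A$ for all $n \geq 0$. (vi) $\Sigma^1 X \gg \Sigma^1 A$ if and only if $X \gg A$.
   Context: All chain complexes are non-negatively graded chain complexes of $R$-modules with homologically graded differentials (lowering degree). A weak equivalence is a chain map inducing an isomorphism on homology. A chain complex is cofibrant if it consists of projective modules in each degree. For a chain complex $A$, $\mathcal{C}(A)$ denotes the smallest collection of chain complexes that (1) contains $A$, (2) is closed under arbitrary direct sums and under weak equivalences (a complex weakly equivalent to a member is a member), and (3) whenever $0 \to X \to Y \to Z \to 0$ is a short exact sequence of chain complexes with $X, Y \in \mathcal{C}(A)$, also $Z \in \mathcal{C}(A)$. One writes $X \gg A$ (''$X$ is $A$-cellular'') if $X \in \mathcal{C}(A)$. $S^n = S^n(R)$ is the complex with $R$ in degree $n$ and $0$ elsewhere. $\Sigma^i$ is the shift: $(\Sigma^i X)_j = X_{j-i}$ with differential $(-1)^i \partial$. *)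

From HB Require Import structures.
From mathcomp Require Import all_boot all_order all_algebra.
Set Implicit Arguments. Unset Strict Implicit. Unset Printing Implicit Defensive.
Import Order.TTheory GRing.Theory Num.Theory.
Local Open Scope ring_scope.

Section ChainComplexes.
Variable R : comPzRingType.

Definition Rlinear (U V : lmodType R) (f : U -> V) : Prop :=
  GRing.linear_for *:%R f.

Unset Implicit Arguments.
Record chain := Chain {
  cmod : nat -> lmodType R;
  cd : forall n, cmod n.+1 -> cmod n;
  cd_lin : forall n, Rlinear (cd n);
  cd_dd : forall n x, cd n (cd n.+1 x) = 0 }.

Record chainmap (X Y : chain) := ChainMap {
  cmap : forall n, cmod X n -> cmod Y n;
  cmap_lin : forall n, Rlinear (cmap n);
  cmap_comm : forall n x, cmap n (cd X n x) = cd Y n (cmap n.+1 x) }.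

Set Implicit Arguments.
Arguments cmap {X Y} c n _.

Definition is_cycle (X : chain) (n : nat) : cmod X n -> Prop :=
  match n return cmod X n -> Prop with
  | 0 => fun _ => True
  | k.+1 => fun x => cd X k x = 0
  end.

Definition is_boundary (X : chain) (n : nat) (x : cmod X n) : Prop :=
  exists y : cmod X n.+1, cd X n y = x.

(* H_n(f) : H_n(X) -> H_n(Y) = Z_n/B_n is injective / surjective. *)
Definition Hinj (X Y : chain) (f : chainmap X Y) (n : nat) : Prop :=
  forall x : cmod X n, is_cycle x -> is_boundary (cmap f n x) -> is_boundary x.

Definition Hsurj (X Y : chain) (f : chainmap X Y) (n : nat) : Prop :=
  forall y : cmod Y n, is_cycle y ->
    exists x : cmod X n, is_cycle x /\ is_boundary (cmap f n x - y).

Definition weq (X Y : chain) (f : chainmap X Y) : Prop :=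
  forall n, Hinj f n /\ Hsurj f n.

Definition acyclic (X : chain) : Prop :=
  forall n (x : cmod X n), is_cycle x -> is_boundary x.

Definition H_nonzero (X : chain) (n : nat) : Prop :=
  exists x : cmod X n, is_cycle x /\ ~ is_boundary x.

Definition projective (P : lmodType R) : Prop :=
  forall (M N : lmodType R) (p : M -> N) (g : P -> N),
    Rlinear p -> Rlinear g -> (forall y : N, exists x : M, p x = y) ->
    exists h : P -> M, Rlinear h /\ forall x, p (h x) = g x.

Definition cofibrant (X : chain) : Prop := forall n, projective (cmod X n).

Definition is_dsum (I : Type) (X : I -> chain) (Y : chain)
    (iota : forall i, chainmap (X i) Y) : Prop :=
  forall (Z : chain) (g : forall i, chainmap (X i) Z),
    exists h : chainmap Y Z,
      (forall i n x, cmap h n (cmap (iota i) n x) = cmap (g i) n x) /\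
      (forall h' : chainmap Y Z,
         (forall i n x, cmap h' n (cmap (iota i) n x) = cmap (g i) n x) ->
         forall n y, cmap h' n y = cmap h n y).

Definition ses (X Y Z : chain) (i : chainmap X Y) (p : chainmap Y Z) : Prop :=
  forall n, injective (cmap i n) /\
    (forall z : cmod Z n, exists y, cmap p n y = z) /\
    (forall y : cmod Y n, cmap p n y = 0 <-> exists x, cmap i n x = y).

Definition retract (X Y : chain) : Prop :=
  exists (s : chainmap X Y) (r : chainmap Y X),
    forall n (x : cmod X n), cmap r n (cmap s n x) = x.

Definition closedC (A : chain) (P : chain -> Prop) : Prop :=
  P A /\
  (forall (I : Type) (X : I -> chain) (Y : chain)
          (iota : forall i, chainmap (X i) Y),
     @is_dsum I X Y iota -> (forall i, P (X i)) -> P Y) /\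
  (forall (X Y : chain) (f : chainmap X Y), weq f -> (P X <-> P Y)) /\
  (forall (X Y Z : chain) (i : chainmap X Y) (p : chainmap Y Z),
     ses i p -> P X -> P Y -> P Z).

(* X >> A : X belongs to the smallest such collection C(A) *)
Definition cellular (X A : chain) : Prop :=
  forall P : chain -> Prop, closedC A P -> P X.

Definition zmod0 : lmodType R := 'rV[R]_0.

Lemma lin_zero (U V : lmodType R) : Rlinear (fun _ : U => (0 : V)).
Proof. by move=> a u v; rewrite scaler0 addr0. Qed.

Definition S0mod (n : nat) : lmodType R :=
  match n with 0 => (R^o : lmodType R) | _.+1 => zmod0 end.

Definition S0 : chain :=
  @Chain S0mod (fun n _ => 0) (fun n => @lin_zero _ _) (fun n x => erefl).

Section Shift.
Variable X : chain.

Definition shmod (n : nat) : lmodType R :=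
  match n with 0 => zmod0 | k.+1 => cmod X k end.

Definition shd (n : nat) : shmod n.+1 -> shmod n :=
  match n return shmod n.+1 -> shmod n with
  | 0 => fun _ => 0
  | k.+1 => fun x => - cd X k x
  end.

Lemma shd_lin n : Rlinear (@shd n).
Proof.
case: n => [|k] /=; first exact: lin_zero.
move=> a u v; rewrite (cd_lin X k) opprD scalerN //.
Qed.

Lemma shd_dd n x : @shd n (@shd n.+1 x) = 0.
Proof.
case: n x => [|k] x //=.
have h0 : cd X k 0 = 0.
  have H := cd_lin X k 1 0 0.
  rewrite scale1r !addr0 scale1r in H.
  have := congr1 (fun z => z - cd X k 0) H.
  by rewrite /= subrr addrK.
have := cd_lin X k (-1) (cd X k.+1 x) 0.
rewrite addr0 h0 addr0 scaleN1r => ->.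
by rewrite cd_dd scaler0 oppr0.
Qed.

Definition shift : chain := @Chain shmod (@shd) shd_lin shd_dd.
End Shift.

Definition shiftn (n : nat) (X : chain) : chain := iter n shift X.

End ChainComplexes.

Arguments cmod {R} c n.
Arguments cd {R} c n _.
Arguments chainmap {R} X Y.
Arguments cmap {R X Y} c n _.
Arguments S0 R.

(** The class [C(A)] is only known through its closure properties, so every part is proved by
exhibiting a class [P] satisfying conditions (1)-(3) and invoking [cellular X A] on it.

The workhorses are two short exact sequences: [0 -> X -> cone(id_X) -> shift X -> 0] with an
acyclic middle term, which gives (v), and the telescope [0 -> (+)Y_n -> (+)Y_n -> X -> 0] of a
sequential colimit [X] of the [Y_n], which shows that [C(A)] is closed under such colimits.
An acyclic complex is weakly equivalent to the empty direct sum, which gives (ii). A retract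
[X] of [Y] is the colimit of [Y -> Y -> ...] along the idempotent, which gives (iii).

For (i), a complex is the colimit of its brutal truncations, each an iterated cone of modules
placed in degree 0; such a module is weakly equivalent to a free resolution, which is built the
same way from free modules, i.e. direct sums of [S^0].

For (iv), the complexes [X] whose [H_0] is generated by the images of chain maps [A -> X]
satisfy (1)-(3); closure under weak equivalences uses that a map from the cofibrant [A] lifts
along a weak equivalence up to a boundary in degree 0.

For (vi), suspension preserves (1)-(3). Conversely the desuspension, with the 1-cycles in
degree 0, preserves them on complexes with [H_0 = 0], and every member of [C(shift A)] has
[H_0 = 0]; desuspending [shift X] gives back [X]. *)

From HB Require Import structures.
From mathcomp Require Import all_boot all_order all_algebra.
From mathcomp Require Import boolp.
Set Implicit Arguments. Unset Strict Implicit. Unset Printing Implicit Defensive.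
Import GRing.Theory.
Local Open Scope ring_scope.

Section Linear.
Variables (R : comPzRingType) (U V : lmodType R) (f : U -> V) (f_lin : Rlinear f).

Lemma lin0 : f 0 = 0.
Proof.
have := f_lin 1 0 0; rewrite scale1r !addr0 scale1r => /(congr1 (fun z => z - f 0)).
by rewrite subrr addrK.
Qed.

Lemma linD x y : f (x + y) = f x + f y.
Proof. by have := f_lin 1 x y; rewrite !scale1r. Qed.

Lemma linZ a x : f (a *: x) = a *: f x.
Proof. by have := f_lin a x 0; rewrite !addr0 lin0 addr0. Qed.

Lemma linN x : f (- x) = - f x.
Proof. by rewrite -scaleN1r linZ scaleN1r. Qed.

Lemma linB x y : f (x - y) = f x - f y.
Proof. by rewrite linD linN. Qed.

Lemma lin_sum (I : Type) (s : seq I) (F : I -> U) :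
  f (\sum_(i <- s) F i) = \sum_(i <- s) f (F i).
Proof.
elim: s => [|a s IH]; first by rewrite !big_nil lin0.
by rewrite !big_cons linD IH.
Qed.

End Linear.

Lemma lin_comp (R : comPzRingType) (U V W : lmodType R) (f : U -> V) (g : V -> W) :
  Rlinear f -> Rlinear g -> Rlinear (fun x => g (f x)).
Proof. by move=> f_lin g_lin a u v; rewrite f_lin g_lin. Qed.

Lemma zmod0_eq0 (R : comPzRingType) (x : zmod0 R) : x = 0.
Proof. exact: thinmx0. Qed.

Section ChainBasics.
Variable R : comPzRingType.
Implicit Types X Y Z : chain R.

Section Differential.
Variables (X : chain R) (n : nat).
Lemma cd0 : cd X n 0 = 0.
Proof. exact: lin0 (cd_lin _ X n). Qed.
Lemma cdD x y : cd X n (x + y) = cd X n x + cd X n y.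
Proof. exact: (linD (cd_lin _ X n) x y). Qed.
Lemma cdN x : cd X n (- x) = - cd X n x.
Proof. exact: (linN (cd_lin _ X n) x). Qed.
Lemma cdB x y : cd X n (x - y) = cd X n x - cd X n y.
Proof. exact: (linB (cd_lin _ X n) x y). Qed.
Lemma cdZ a x : cd X n (a *: x) = a *: cd X n x.
Proof. exact: (linZ (cd_lin _ X n) a x). Qed.
Lemma cd_sum (I : Type) (s : seq I) (F : I -> cmod X n.+1) :
  cd X n (\sum_(i <- s) F i) = \sum_(i <- s) cd X n (F i).
Proof. exact: (lin_sum (cd_lin _ X n) s F). Qed.
End Differential.

Section ChainMapLinear.
Variables (X Y : chain R) (f : chainmap X Y) (n : nat).
Lemma cmap0 : cmap f n 0 = 0.
Proof. exact: lin0 (cmap_lin _ _ _ f n). Qed.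
Lemma cmapD x y : cmap f n (x + y) = cmap f n x + cmap f n y.
Proof. exact: (linD (cmap_lin _ _ _ f n) x y). Qed.
Lemma cmapN x : cmap f n (- x) = - cmap f n x.
Proof. exact: (linN (cmap_lin _ _ _ f n) x). Qed.
Lemma cmapB x y : cmap f n (x - y) = cmap f n x - cmap f n y.
Proof. exact: (linB (cmap_lin _ _ _ f n) x y). Qed.
Lemma cmapZ a x : cmap f n (a *: x) = a *: cmap f n x.
Proof. exact: (linZ (cmap_lin _ _ _ f n) a x). Qed.
Lemma cmap_sum (I : Type) (s : seq I) (F : I -> cmod X n) :
  cmap f n (\sum_(i <- s) F i) = \sum_(i <- s) cmap f n (F i).
Proof. exact: (lin_sum (cmap_lin _ _ _ f n) s F). Qed.
End ChainMapLinear.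

Definition id_chainmap X : chainmap X X :=
  @ChainMap R X X (fun n x => x) (fun n a u v => erefl) (fun n x => erefl).

Definition comp_chainmap X Y Z (g : chainmap Y Z) (f : chainmap X Y) : chainmap X Z.
Proof.
refine (@ChainMap R X Z (fun n x => cmap g n (cmap f n x))
   (fun n => lin_comp (cmap_lin _ _ _ f n) (cmap_lin _ _ _ g n)) _).
by move=> n x; rewrite !cmap_comm.
Defined.

Definition zero_chainmap X Y : chainmap X Y :=
  @ChainMap R X Y (fun n _ => 0) (fun n => @lin_zero R _ _) (fun n x => esym (cd0 Y n)).

Section BoundariesCycles.
Variables (X : chain R) (n : nat).
Implicit Types x y : cmod X n.

Lemma boundary0 : is_boundary (0 : cmod X n).
Proof. by exists 0; rewrite cd0. Qed.
Lemma boundaryD x y : is_boundary x -> is_boundary y -> is_boundary (x + y).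
Proof. by move=> [a <-] [b <-]; exists (a + b); rewrite cdD. Qed.
Lemma boundaryN x : is_boundary x -> is_boundary (- x).
Proof. by move=> [a <-]; exists (- a); rewrite cdN. Qed.
Lemma boundaryB x y : is_boundary x -> is_boundary y -> is_boundary (x - y).
Proof. by move=> bx /boundaryN; apply: boundaryD. Qed.
Lemma boundary_sum (I : Type) (s : seq I) (F : I -> cmod X n) :
  (forall i, is_boundary (F i)) -> is_boundary (\sum_(i <- s) F i).
Proof.
move=> bF; elim: s => [|a s IH]; first by rewrite big_nil; apply: boundary0.
by rewrite big_cons; apply: boundaryD.
Qed.
Lemma boundary_cd (x : cmod X n.+1) : is_boundary (cd X n x).
Proof. by exists x. Qed.

Lemma cycle0 : is_cycle (0 : cmod X n).
Proof. by case: n => //= k; rewrite cd0. Qed.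
End BoundariesCycles.

Lemma boundary_cmap X Y (f : chainmap X Y) n (x : cmod X n) :
  is_boundary x -> is_boundary (cmap f n x).
Proof. by move=> [a <-]; exists (cmap f n.+1 a); rewrite cmap_comm. Qed.

Definition bijective_chainmap X Y (f : chainmap X Y) : Prop :=
  (forall n, injective (cmap f n)) /\ (forall n y, exists x, cmap f n x = y).

Lemma bijective_weq X Y (f : chainmap X Y) : bijective_chainmap f -> weq f.
Proof.
move=> [f_inj f_surj] n; split.
  move=> x _ [y' e]; have [y ey] := f_surj n.+1 y'.
  by exists y; apply: f_inj; rewrite cmap_comm ey.
move=> y cy; have [x ex] := f_surj n y.
exists x; split; last by rewrite ex subrr; apply: boundary0.
move: cy; rewrite -ex {ex y}; case: n f_inj x => //= n f_inj x cfx.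
by apply: f_inj; rewrite cmap_comm cfx cmap0.
Qed.

Section ClosedC.
Variables (A : chain R) (P : chain R -> Prop) (hP : closedC A P).

Lemma closedC_base : P A.
Proof. by case: hP. Qed.

Lemma closedC_dsum (I : Type) (X : I -> chain R) Y (iota : forall i, chainmap (X i) Y) :
  is_dsum iota -> (forall i, P (X i)) -> P Y.
Proof. by case: hP => _ [dsumP _]; apply: dsumP. Qed.

Lemma closedC_weq X Y (f : chainmap X Y) : weq f -> P X <-> P Y.
Proof. by case: hP => _ [_ [weqP _]]; apply: weqP. Qed.

Lemma closedC_ses X Y Z (i : chainmap X Y) (p : chainmap Y Z) :
  ses i p -> P X -> P Y -> P Z.
Proof. by case: hP => _ [_ [_ sesP]]; apply: sesP. Qed.

Lemma closedC_bij X Y (f : chainmap X Y) : bijective_chainmap f -> P X <-> P Y.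
Proof. by move/bijective_weq; apply: closedC_weq. Qed.

End ClosedC.

End ChainBasics.

Section DirectSum.
Variables (R : comPzRingType) (I : Type) (M : I -> lmodType R).

(* Supports are listed in [seq {classic I}] so that no decidable equality on [I] is needed. *)
Definition finsupp (f : forall i, M i) : Prop :=
  exists s : seq {classic I}, forall i : {classic I}, i \notin s -> f i = 0.

Record dsum_type := DSum { dcomp : forall i, M i ; dcomp_finsupp : finsupp dcomp }.

Lemma dsum_eq (u v : dsum_type) : (forall i, dcomp u i = dcomp v i) -> u = v.
Proof.
case: u v => [u su] [v sv] /= e.
have {e} e : u = v by apply: functional_extensionality_dep.
by subst v; rewrite (Prop_irrelevance su sv).
Qed.

HB.instance Definition _ := gen_eqMixin dsum_type.
HB.instance Definition _ := gen_choiceMixin dsum_type.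

Lemma finsupp0 : finsupp (fun i => 0).
Proof. by exists [::]. Qed.

Lemma finsuppD u v : finsupp u -> finsupp v -> finsupp (fun i => u i + v i).
Proof.
move=> [s su] [t sv]; exists (s ++ t) => i.
by rewrite mem_cat negb_or => /andP[/su -> /sv ->]; rewrite addr0.
Qed.

Lemma finsuppZ a u : finsupp u -> finsupp (fun i => a *: u i).
Proof. by move=> [s su]; exists s => i /su ->; rewrite scaler0. Qed.

Lemma finsuppN u : finsupp u -> finsupp (fun i => - u i).
Proof. by move=> [s su]; exists s => i /su ->; rewrite oppr0. Qed.

Definition dsum_zero := DSum finsupp0.
Definition dsum_add u v := DSum (finsuppD (dcomp_finsupp u) (dcomp_finsupp v)).
Definition dsum_opp u := DSum (finsuppN (dcomp_finsupp u)).
Definition dsum_scale a u := DSum (finsuppZ a (dcomp_finsupp u)).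

Lemma dsum_addA : associative dsum_add.
Proof. by move=> u v w; apply: dsum_eq => i /=; rewrite addrA. Qed.
Lemma dsum_addC : commutative dsum_add.
Proof. by move=> u v; apply: dsum_eq => i /=; rewrite addrC. Qed.
Lemma dsum_add0 : left_id dsum_zero dsum_add.
Proof. by move=> u; apply: dsum_eq => i /=; rewrite add0r. Qed.
Lemma dsum_addN : left_inverse dsum_zero dsum_opp dsum_add.
Proof. by move=> u; apply: dsum_eq => i /=; rewrite addNr. Qed.
HB.instance Definition _ :=
  GRing.isZmodule.Build dsum_type dsum_addA dsum_addC dsum_add0 dsum_addN.

Lemma dsum_scaleA a b v : dsum_scale a (dsum_scale b v) = dsum_scale (a * b) v.
Proof. by apply: dsum_eq => i /=; rewrite scalerA. Qed.
Lemma dsum_scale1 : left_id 1 dsum_scale.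
Proof. by move=> u; apply: dsum_eq => i /=; rewrite scale1r. Qed.
Lemma dsum_scaleDr : right_distributive dsum_scale +%R.
Proof. by move=> a u v; apply: dsum_eq => i /=; rewrite scalerDr. Qed.
Lemma dsum_scaleDl v : {morph dsum_scale^~ v: a b / a + b}.
Proof. by move=> a b; apply: dsum_eq => i /=; rewrite scalerDl. Qed.
HB.instance Definition _ := GRing.Zmodule_isLmodule.Build R dsum_type
  dsum_scaleA dsum_scale1 dsum_scaleDr dsum_scaleDl.

Definition dsum : lmodType R := dsum_type.

Lemma dcomp_sum (J : Type) (s : seq J) (F : J -> dsum) i :
  dcomp (\sum_(j <- s) F j) i = \sum_(j <- s) dcomp (F j) i.
Proof. by elim: s => [|a s IH]; rewrite ?big_nil ?big_cons //= IH. Qed.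

Lemma dsupp_exists (u : dsum) :
  exists s : seq {classic I}, uniq s /\ forall i, i \notin s -> dcomp u i = 0.
Proof.
case: (dcomp_finsupp u) => s su; exists (undup s); split; first exact: undup_uniq.
by move=> i; rewrite mem_undup; apply: su.
Qed.

Definition dsupp (u : dsum) : seq {classic I} := sval (cid (dsupp_exists u)).

Lemma dsupp_uniq u : uniq (dsupp u).
Proof. exact: (proj1 (svalP (cid (dsupp_exists u)))). Qed.

Lemma dcomp_notin_dsupp u i : i \notin dsupp u -> dcomp u i = 0.
Proof. exact: (proj2 (svalP (cid (dsupp_exists u)))). Qed.

Definition dsum_in_fun (i : I) (x : M i) : forall j, M j :=
  fun j => if pselect (i = j) is left e then eq_rect i M x j e else 0.

Lemma finsupp_in i (x : M i) : finsupp (dsum_in_fun x).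
Proof.
exists [:: i : {classic I}] => j; rewrite inE => /eqP ij.
by rewrite /dsum_in_fun; case: pselect => // e; case: ij.
Qed.

Definition dsum_in i (x : M i) : dsum := DSum (finsupp_in x).

Lemma dcomp_in_id i (x : M i) : dcomp (dsum_in x) i = x.
Proof. by rewrite /= /dsum_in_fun; case: pselect => // e; rewrite (Prop_irrelevance e erefl). Qed.

Lemma dcomp_in_neq i (x : M i) j : i <> j -> dcomp (dsum_in x) j = 0.
Proof. by rewrite /= /dsum_in_fun; case: pselect. Qed.

Lemma dsum_in_lin i : Rlinear (@dsum_in i).
Proof.
move=> a x y; apply: dsum_eq => j /=; rewrite /dsum_in_fun.
by case: pselect => [e|_]; [case: j / e | rewrite scaler0 addr0].
Qed.

Lemma dsum_decomp (u : dsum) (s : seq {classic I}) : uniq s ->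
  (forall i, i \notin s -> dcomp u i = 0) -> u = \sum_(i <- s) dsum_in (dcomp u i).
Proof.
move=> s_uniq su; apply: dsum_eq => j; rewrite dcomp_sum.
have in_neq i : i <> j -> dcomp (dsum_in (dcomp u i)) j = 0 by apply: dcomp_in_neq.
case: (boolP ((j : {classic I}) \in s)) => js.
  rewrite (bigD1_seq (j : {classic I})) // dcomp_in_id big1 => [|i /eqP].
    by rewrite /= addr0.
  exact: in_neq.
rewrite su // big1_seq // => i /andP[_ si]; apply: in_neq => ij.
by move: js; rewrite -ij si.
Qed.

Lemma sum_eq_outside_support (N : zmodType) (F : {classic I} -> N) (s t : seq {classic I}) :
  uniq s -> uniq t -> (forall i, i \notin s -> F i = 0) -> (forall i, i \notin t -> F i = 0) ->
  \sum_(i <- s) F i = \sum_(i <- t) F i.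
Proof.
move=> s_uniq t_uniq Fs Ft.
have restrict (a b : seq {classic I}) : (forall i, i \notin b -> F i = 0) ->
    \sum_(i <- a) F i = \sum_(i <- a | i \in b) F i.
  move=> Fb; rewrite [RHS]big_mkcond; apply: eq_bigr => i _.
  by case: ifP => // /negbT /Fb.
rewrite (restrict s t) // (restrict t s) // -[LHS]big_filter -[RHS]big_filter.
apply/perm_big/uniq_perm; rewrite ?filter_uniq // => i.
by rewrite !mem_filter andbC.
Qed.

Section Out.
Variables (N : lmodType R) (G : forall i, M i -> N) (G_lin : forall i, Rlinear (@G i)).

Definition dsum_out (u : dsum) : N := \sum_(i <- dsupp u) G (dcomp u i).

Lemma dsum_outE u (s : seq {classic I}) : uniq s ->
  (forall i, i \notin s -> dcomp u i = 0) -> dsum_out u = \sum_(i <- s) G (dcomp u i).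
Proof.
move=> s_uniq us; apply: sum_eq_outside_support => //; first exact: dsupp_uniq.
  by move=> i /dcomp_notin_dsupp ->; rewrite (lin0 (@G_lin i)).
by move=> i /us ->; rewrite (lin0 (@G_lin i)).
Qed.

Lemma dsum_out_lin : Rlinear dsum_out.
Proof.
move=> a u v; set s := undup (dsupp u ++ dsupp v).
have s_uniq : uniq s by apply: undup_uniq.
have us i : i \notin s -> dcomp u i = 0.
  by rewrite mem_undup mem_cat negb_or => /andP[/dcomp_notin_dsupp ? _].
have vs i : i \notin s -> dcomp v i = 0.
  by rewrite mem_undup mem_cat negb_or => /andP[_ /dcomp_notin_dsupp].
rewrite (dsum_outE s_uniq us) (dsum_outE s_uniq vs) (dsum_outE s_uniq); last first.
  by move=> i si /=; rewrite us // vs // scaler0 addr0.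
by rewrite scaler_sumr -big_split; apply: eq_bigr => i _ /=; rewrite G_lin.
Qed.

Lemma dsum_out_in i (x : M i) : dsum_out (dsum_in x) = G x.
Proof.
rewrite (@dsum_outE _ [:: i : {classic I}]) ?big_seq1 ?dcomp_in_id // => j.
by rewrite inE => /eqP ij; apply: dcomp_in_neq => e; apply: ij; rewrite e.
Qed.

Lemma dsum_out_unique (h : dsum -> N) : Rlinear h ->
  (forall i x, h (@dsum_in i x) = G x) -> forall u, h u = dsum_out u.
Proof.
move=> h_lin hG u; have su := @dcomp_notin_dsupp u.
rewrite (dsum_outE (dsupp_uniq u) su) {1}(dsum_decomp (dsupp_uniq u) su) (lin_sum h_lin).
by apply: eq_bigr => i _; apply: hG.
Qed.

End Out.
End DirectSum.

Arguments dsum_in {R I M} i x.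
Arguments dsum_out {R I M N} G u.

Section DirectSumChain.
Variables (R : comPzRingType) (I : Type) (X : I -> chain R).

Definition dsumC_mod n : lmodType R := dsum (fun i => cmod (X i) n).

Lemma finsupp_cd n (u : dsumC_mod n.+1) : finsupp (fun i => cd (X i) n (dcomp u i)).
Proof. by case: (dcomp_finsupp u) => s su; exists s => i /su ->; apply: cd0. Qed.

Definition dsumC_d n (u : dsumC_mod n.+1) : dsumC_mod n := DSum (finsupp_cd u).

Lemma dsumC_d_lin n : Rlinear (@dsumC_d n).
Proof. by move=> a u v; apply: dsum_eq => i /=; rewrite cdD cdZ. Qed.

Lemma dsumC_dd n u : @dsumC_d n (@dsumC_d n.+1 u) = 0.
Proof. by apply: dsum_eq => i /=; apply: cd_dd. Qed.

Definition dsumC : chain R := @Chain R dsumC_mod dsumC_d dsumC_d_lin dsumC_dd.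

Definition dsumC_in (i : I) : chainmap (X i) dsumC.
Proof.
refine (@ChainMap R (X i) dsumC (fun n => @dsum_in _ _ (fun i => cmod (X i) n) i)
   (fun n => @dsum_in_lin R I (fun i => cmod (X i) n) i) _).
move=> n x; apply: dsum_eq => j /=; rewrite /dsum_in_fun.
by case: pselect => [e|_]; [case: j / e | rewrite cd0].
Defined.

Section Out.
Variables (Z : chain R) (g : forall i, chainmap (X i) Z).

Lemma dsumC_out_comm n (x : cmod dsumC n.+1) :
  dsum_out (fun i => cmap (g i) n) (cd dsumC n x)
  = cd Z n (dsum_out (fun i => cmap (g i) n.+1) x).
Proof.
have g_lin m i : Rlinear (cmap (g i) m) by apply: cmap_lin.
have xs := @dcomp_notin_dsupp _ _ _ x.
rewrite (dsum_outE (g_lin n.+1) (dsupp_uniq x) xs) (dsum_outE (g_lin n) (dsupp_uniq x)).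
  by rewrite cd_sum; apply: eq_bigr => i _; rewrite /= cmap_comm.
by move=> i /xs /= ->; rewrite cd0.
Qed.

Definition dsumC_out : chainmap dsumC Z :=
  @ChainMap R dsumC Z (fun n => dsum_out (fun i => cmap (g i) n))
    (fun n => dsum_out_lin (fun i => cmap_lin _ _ _ (g i) n)) dsumC_out_comm.

Lemma dsumC_out_in i n x : cmap dsumC_out n (cmap (dsumC_in i) n x) = cmap (g i) n x.
Proof. exact: (@dsum_out_in _ _ (fun j => cmod (X j) n) _ _ (fun j => cmap_lin _ _ _ (g j) n)). Qed.

End Out.

Lemma dsumC_is_dsum : is_dsum dsumC_in.
Proof.
move=> Z g; exists (dsumC_out g); split=> [|h' h'g n y]; first exact: dsumC_out_in.
apply: dsum_out_unique => [i|x|i x]; [exact: cmap_lin | exact: (cmap_lin _ _ _ h' n) | exact: h'g].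
Qed.

End DirectSumChain.

Arguments dsumC_in {R I} X i.
Arguments dsumC_is_dsum {R I} X.
Arguments dsumC_out {R I X Z} g.

Lemma is_dsum_iso (R : comPzRingType) (I : Type) (X : I -> chain R) (Y : chain R)
  (iota : forall i, chainmap (X i) Y) : is_dsum iota ->
  exists phi : chainmap (dsumC X) Y, bijective_chainmap phi /\
    forall i n x, cmap phi n (cmap (dsumC_in X i) n x) = cmap (iota i) n x.
Proof.
move=> Y_dsum.
have [phi [phi_in _]] := dsumC_is_dsum X Y iota.
have [psi [psi_in _]] := Y_dsum _ (dsumC_in X).
have [? [_ dsumC_uniq]] := dsumC_is_dsum X _ (dsumC_in X).
have [? [_ Y_uniq]] := Y_dsum _ iota.
have psiK n x : cmap psi n (cmap phi n x) = x.
  have e1 := dsumC_uniq (comp_chainmap psi phi)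
    (fun i m z => etrans (f_equal _ (phi_in i m z)) (psi_in i m z)) n x.
  by rewrite /= in e1; rewrite e1 -(dsumC_uniq (id_chainmap _) (fun i m z => erefl)).
have phiK n y : cmap phi n (cmap psi n y) = y.
  have e1 := Y_uniq (comp_chainmap phi psi)
    (fun i m z => etrans (f_equal _ (psi_in i m z)) (phi_in i m z)) n y.
  by rewrite /= in e1; rewrite e1 -(Y_uniq (id_chainmap _) (fun i m z => erefl)).
exists phi; split=> //; split=> n; last by move=> y; exists (cmap psi n y).
exact: can_inj (psiK n).
Qed.

Lemma pairD (U V : zmodType) (x1 x2 : U) (y1 y2 : V) :
  (x1, y1) + (x2, y2) = (x1 + x2, y1 + y2) :> U * V.
Proof. by []. Qed.

Lemma pairZ (R : comPzRingType) (U V : lmodType R) a (x : U) (y : V) :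
  a *: (x, y) = (a *: x, a *: y) :> U * V.
Proof. by []. Qed.

Section ConeConstructions.
Variable R : comPzRingType.
Implicit Types X Y Z A B C : chain R.

Lemma shd0 X n : @shd R X n 0 = 0.
Proof. exact: lin0 (@shd_lin R X n). Qed.
Lemma shdD X n x y : @shd R X n (x + y) = shd x + shd y.
Proof. exact: (linD (@shd_lin R X n) x y). Qed.
Lemma shdZ X n a x : @shd R X n (a *: x) = a *: shd x.
Proof. exact: (linZ (@shd_lin R X n) a x). Qed.

Section BinarySum.
Variables C B : chain R.

Definition dsum2C_d n (x : cmod C n.+1 * cmod B n.+1) : cmod C n * cmod B n :=
  (cd C n x.1, cd B n x.2).

Lemma dsum2C_d_lin n : Rlinear (@dsum2C_d n).
Proof. by move=> a u v; rewrite /dsum2C_d /= !cdD !cdZ. Qed.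

Lemma dsum2C_dd n x : @dsum2C_d n (@dsum2C_d n.+1 x) = 0.
Proof. by rewrite /dsum2C_d /= !cd_dd. Qed.

Definition dsum2C : chain R :=
  @Chain R (fun n => (cmod C n * cmod B n)%type) dsum2C_d dsum2C_d_lin dsum2C_dd.

Definition dsum2C_inl : chainmap C dsum2C.
Proof.
refine (@ChainMap R C dsum2C (fun n x => (x, 0)) _ _).
- by move=> n a u v; rewrite pairZ pairD scaler0 addr0.
- by move=> n x; rewrite /= /dsum2C_d /= cd0.
Defined.

Definition dsum2C_inr : chainmap B dsum2C.
Proof.
refine (@ChainMap R B dsum2C (fun n x => (0, x)) _ _).
- by move=> n a u v; rewrite pairZ pairD scaler0 addr0.
- by move=> n x; rewrite /= /dsum2C_d /= cd0.
Defined.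

Definition dsum2C_in (b : bool) : chainmap (if b then C else B) dsum2C :=
  if b is true then dsum2C_inl else dsum2C_inr.

Lemma dsum2C_is_dsum : is_dsum dsum2C_in.
Proof.
move=> Z g; pose h n (x : cmod dsum2C n) := cmap (g true) n x.1 + cmap (g false) n x.2.
have h_lin n : Rlinear (@h n).
  move=> a u v; rewrite /h /= !cmapD !cmapZ scalerDr.
  by rewrite -!addrA; congr (_ + _); rewrite addrCA.
have h_comm n x : h n (cd dsum2C n x) = cd Z n (h n.+1 x).
  by rewrite /h /= !cmap_comm cdD.
exists (@ChainMap R dsum2C Z h h_lin h_comm); split.
  by case=> n x; rewrite /= /h /= cmap0 ?addr0 ?add0r.
move=> h' h'g n [x y] /=; rewrite /h /=.
have -> : (x, y) = (x, 0) + (0, y) :> cmod dsum2C n by rewrite pairD addr0 add0r.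
by rewrite cmapD (h'g true n x) (h'g false n y).
Qed.

End BinarySum.

Arguments dsum2C_is_dsum : clear implicits.

Section Cone.
Variables (A B : chain R) (g : chainmap A B).

Definition cone_d n (x : cmod B n.+1 * shmod A n.+1) : cmod B n * shmod A n :=
  (cd B n x.1 + cmap g n x.2, shd x.2).

Lemma cone_d_lin n : Rlinear (@cone_d n).
Proof.
move=> a u v; rewrite /cone_d /= pairZ pairD cdD cdZ cmapD cmapZ shdD shdZ scalerDr.
congr pair; rewrite -!addrA; congr (_ + _); by rewrite addrCA.
Qed.

Lemma cone_dd n x : @cone_d n (@cone_d n.+1 x) = 0.
Proof. by rewrite /cone_d /= shd_dd cdD cd_dd add0r cmapN cmap_comm addrN. Qed.

Definition cone : chain R :=
  @Chain R (fun n => (cmod B n * shmod A n)%type) cone_d cone_d_lin cone_dd.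

End Cone.

Lemma cone_id_acyclic A : acyclic (cone (id_chainmap A)).
Proof.
case=> [|n] [b a] cba; exists (0, b); rewrite /= /cone_d /= cd0 add0r; congr pair.
  exact/esym/zmod0_eq0.
have {}cba : cd A n b + a = 0 := congr1 fst cba.
by apply/eqP; rewrite eq_sym -subr_eq0 opprK addrC cba.
Qed.

Definition cone_id_in X : chainmap X (cone (id_chainmap X)).
Proof.
refine (@ChainMap R X (cone (id_chainmap X)) (fun n x => (x, 0)) _ _).
- by move=> n a u v; rewrite pairZ pairD scaler0 addr0.
- by move=> n x; rewrite /= /cone_d /= shd0 addr0.
Defined.

Definition cone_id_out X : chainmap (cone (id_chainmap X)) (shift X) :=
  @ChainMap R (cone (id_chainmap X)) (shift X) (fun n x => x.2)
    (fun n a u v => erefl) (fun n x => erefl).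

Lemma cone_id_ses X : ses (cone_id_in X) (cone_id_out X).
Proof.
move=> n; split; first by move=> x y /= /(congr1 fst).
split; first by move=> z; exists (0, z).
by move=> [b a] /=; split=> [->|[x [_ <-]]]; first exists b.
Qed.

(* The short exact sequence [0 -> A -> cone(id_A) + B -> cone g -> 0]. *)
Definition cone_ses_in A B (g : chainmap A B) : chainmap A (dsum2C (cone (id_chainmap A)) B).
Proof.
refine (@ChainMap R A (dsum2C (cone (id_chainmap A)) B)
  (fun n x => ((x, 0), - cmap g n x)) _ _).
- by move=> n a u v; rewrite !pairZ !pairD scaler0 addr0 cmapD cmapZ opprD scalerN.
- by move=> n x; rewrite /= /dsum2C_d /= /cone_d /= shd0 addr0 cdN cmap_comm.
Defined.

Definition cone_ses_out A B (g : chainmap A B) :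
  chainmap (dsum2C (cone (id_chainmap A)) B) (cone g).
Proof.
refine (@ChainMap R (dsum2C (cone (id_chainmap A)) B) (cone g)
   (fun n x => (x.2 + cmap g n x.1.1, x.1.2)) _ _).
- move=> n a [[u1 u2] u3] [[v1 v2] v3] /=; rewrite cmapD cmapZ pairZ pairD.
  congr pair; rewrite scalerDr -!addrA; congr (_ + _); by rewrite addrCA.
- by move=> n x; rewrite /= /dsum2C_d /= /cone_d /= cmapD cmap_comm cdD -!addrA.
Defined.

Lemma cone_ses A B (g : chainmap A B) : ses (cone_ses_in g) (cone_ses_out g).
Proof.
move=> n; split; first by move=> x y /= /(congr1 (fun z => z.1.1)).
split; first by move=> [b a]; exists ((0, a), b); rewrite /= cmap0 addr0.
move=> [[x1 x2] y] /=; split=> [e|[x [-> <- <-]]]; last by rewrite /= addNr.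
exists x1; have /= e1 : y + cmap g n x1 = 0 := congr1 fst e.
have -> : x2 = 0 := congr1 snd e.
by congr pair; rewrite -[RHS](addrK (cmap g n x1)) e1 sub0r.
Qed.

Section ConeClosure.
Variables (A : chain R) (P : chain R -> Prop) (hP : closedC A P).

Lemma closedC_acyclic X : acyclic X -> P X.
Proof.
move=> X_acyc; pose F (e : False) : chain R := match e with end.
have F0 n (u : cmod (dsumC F) n) : u = 0 by apply: dsum_eq => -[].
apply/(closedC_weq hP (f := zero_chainmap (dsumC F) X)).
  move=> n; split=> [x _ _|y cy]; first by rewrite (F0 n x); apply: boundary0.
  by exists 0; split; [apply: cycle0 | rewrite /= sub0r; apply/boundaryN/X_acyc].
by apply: (closedC_dsum hP (dsumC_is_dsum F)) => -[].
Qed.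

Lemma closedC_dsum2 C B : P C -> P B -> P (dsum2C C B).
Proof. by move=> PC PB; apply: (closedC_dsum hP (dsum2C_is_dsum C B)); case. Qed.

Lemma closedC_shift X : P X -> P (shift X).
Proof.
move=> PX; apply: (closedC_ses hP (cone_id_ses X)) => //.
exact/closedC_acyclic/cone_id_acyclic.
Qed.

Lemma closedC_shiftn n X : P X -> P (shiftn n X).
Proof. by move=> PX; elim: n => [|n IH] //; apply: closedC_shift. Qed.

Lemma closedC_cone B C (g : chainmap B C) : P B -> P C -> P (cone g).
Proof.
move=> PB PC; apply: (closedC_ses hP (cone_ses g)) => //.
exact/closedC_dsum2/PC/closedC_acyclic/cone_id_acyclic.
Qed.

End ConeClosure.
End ConeConstructions.

Lemma mem_classic (T : eqType) (s : seq T) (x : T) :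
  (x \in (s : seq {classic T})) = (x \in s).
Proof.
elim: s => [|a s IH] //; rewrite in_cons [LHS]in_cons IH; congr (_ || _).
by apply/idP/idP => /eqP ->.
Qed.

Lemma uniq_classic (T : eqType) (s : seq T) : uniq (s : seq {classic T}) = uniq s.
Proof.
elim: s => [|a s IH] //; rewrite cons_uniq [LHS]cons_uniq IH.
by congr (~~ _ && _); apply: (mem_classic s a).
Qed.

Section NatIndexedSum.
Variables (R : comPzRingType) (M : nat -> lmodType R).

Lemma dsum_nat_bound (u : dsum M) : exists N, forall n, (N <= n)%N -> dcomp u n = 0.
Proof.
exists (\max_(i <- (dsupp u : seq nat)) i).+1 => n Nn; apply: dcomp_notin_dsupp.
apply/negP => n_supp; move: Nn; rewrite ltnNge (@leq_bigmax_seq _ _ xpredT id) //.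
by rewrite -(mem_classic (dsupp u : seq nat)).
Qed.

Lemma iota_classic_support N (f : forall n, M n) : (forall n, (N <= n)%N -> f n = 0) ->
  forall n : {classic nat}, n \notin (iota 0 N : seq {classic nat}) -> f n = 0.
Proof. by move=> fN n; rewrite (mem_classic (iota 0 N)) mem_iota add0n /= -leqNgt; apply: fN. Qed.

Lemma finsupp_nat_bound (f : forall n, M n) N :
  (forall n, (N <= n)%N -> f n = 0) -> finsupp f.
Proof. by move=> fN; exists (iota 0 N); apply: iota_classic_support. Qed.

Lemma dsum_out_nat (V : lmodType R) (G : forall i, M i -> V) (u : dsum M) N :
  (forall i, Rlinear (G i)) -> (forall n, (N <= n)%N -> dcomp u n = 0) ->
  dsum_out G u = \sum_(0 <= i < N) G i (dcomp u i).
Proof.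
move=> G_lin uN; rewrite (dsum_outE G_lin _ (iota_classic_support uN)) ?uniq_classic ?iota_uniq //.
by rewrite /index_iota subn0.
Qed.

End NatIndexedSum.

Section SequentialColimit.
Variables (R : comPzRingType) (Y : nat -> chain R) (phi : forall n, chainmap (Y n) (Y n.+1)).
Variables (X : chain R) (psi : forall n, chainmap (Y n) X).
(* [X] is the colimit of the [Y_n]; a kernel element of [psi n] already dies in [Y_(n+1)]. *)
Hypothesis psi_phi : forall n k y, cmap (psi n.+1) k (cmap (phi n) k y) = cmap (psi n) k y.
Hypothesis psi_exhaustive : forall k x, exists n y, cmap (psi n) k y = x.
Hypothesis psi_ker : forall n k y, cmap (psi n) k y = 0 -> cmap (phi n) k y = 0.

Definition telescope_fun k (u : cmod (dsumC Y) k) : forall n, cmod (Y n) k :=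
  fun n => if n is m.+1 then dcomp u m.+1 - cmap (phi m) k (dcomp u m) else dcomp u 0.

Lemma telescope_finsupp k u : finsupp (@telescope_fun k u).
Proof.
have [N uN] := dsum_nat_bound u; apply: (@finsupp_nat_bound _ _ _ N.+1) => -[|n] Nn //.
by rewrite /telescope_fun !uN ?cmap0 ?subrr // ltnW.
Qed.

Definition telescope_map k (u : cmod (dsumC Y) k) : cmod (dsumC Y) k :=
  DSum (telescope_finsupp u).

Lemma telescope_map_lin k : Rlinear (@telescope_map k).
Proof.
move=> a u v; apply: dsum_eq => -[|n] //=.
by rewrite cmapD cmapZ opprD scalerBr -!addrA; congr (_ + _); rewrite addrCA.
Qed.

Lemma telescope_map_comm k u :
  telescope_map (cd (dsumC Y) k u) = cd (dsumC Y) k (telescope_map u).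
Proof. by apply: dsum_eq => -[|n] //=; rewrite cdB cmap_comm. Qed.

Definition telescope : chainmap (dsumC Y) (dsumC Y) :=
  @ChainMap R _ _ telescope_map telescope_map_lin telescope_map_comm.

Local Notation out := (dsumC_out psi).

Lemma out_nat k (u : cmod (dsumC Y) k) N : (forall n, (N <= n)%N -> dcomp u n = 0) ->
  cmap out k u = \sum_(0 <= i < N) cmap (psi i) k (dcomp u i).
Proof. by apply: dsum_out_nat => i; apply: cmap_lin. Qed.

Lemma telescope_inj k : injective (cmap telescope k).
Proof.
suff T0 w : cmap telescope k w = 0 -> w = 0.
  by move=> u v e; apply/eqP; rewrite -subr_eq0; apply/eqP/T0; rewrite cmapB e subrr.
move=> Tw; apply: dsum_eq => n; elim: n => [|n IH]; first exact: (congr1 (fun z => dcomp z 0) Tw).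
by have /= := congr1 (fun z => dcomp z n.+1) Tw; rewrite IH cmap0 subr0.
Qed.

Lemma out_telescope k v : cmap out k (cmap telescope k v) = 0.
Proof.
have [N vN] := dsum_nat_bound v.
have partial m : \sum_(0 <= i < m.+1) cmap (psi i) k (dcomp (telescope_map v) i)
                 = cmap (psi m) k (dcomp v m).
  elim: m => [|m IH]; first by rewrite big_nat1.
  by rewrite big_nat_recr //= IH cmapB psi_phi addrC subrK.
rewrite (@out_nat _ _ N.+1) /= ?partial ?vN ?cmap0 // => -[|n] Nn //=.
by rewrite !vN ?cmap0 ?subrr // ltnW.
Qed.

Lemma out_ker_telescope k w : cmap out k w = 0 -> exists v, cmap telescope k v = w.
Proof.
move=> w0; have [N wN] := dsum_nat_bound w.
pose fix v m : cmod (Y m) k :=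
  if m is m'.+1 then dcomp w m'.+1 + cmap (phi m') k (v m') else dcomp w 0.
have psi_v m : cmap (psi m) k (v m) = \sum_(0 <= i < m.+1) cmap (psi i) k (dcomp w i).
  elim: m => [|m IH]; first by rewrite big_nat1.
  by rewrite big_nat_recr //= cmapD psi_phi IH addrC.
have phi_vN : cmap (phi N) k (v N) = 0.
  by apply: psi_ker; rewrite psi_v -(out_nat (N := N.+1)) // => n /ltnW /wN.
have v_bound m : (N < m)%N -> v m = 0.
  elim: m => [|m IH] //; rewrite ltnS leq_eqVlt => /orP[/eqP <-|Nm] /=.
    by rewrite phi_vN wN // addr0.
  by rewrite IH // cmap0 wN ?addr0 // ltnW // ltnW.
exists (DSum (finsupp_nat_bound (N := N.+1) v_bound)).
by apply: dsum_eq => -[|m] //=; rewrite addrK.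
Qed.

Lemma telescope_ses : ses telescope out.
Proof.
move=> k; split; [exact: telescope_inj | split].
  move=> x; have [n [y <-]] := psi_exhaustive x.
  by exists (cmap (dsumC_in Y n) k y); apply: dsumC_out_in.
by move=> w; split=> [/out_ker_telescope|[v <-]]; last exact: out_telescope.
Qed.

Lemma closedC_colim (A : chain R) (P : chain R -> Prop) :
  closedC A P -> (forall n, P (Y n)) -> P X.
Proof.
move=> hP PY; have P_dsum := closedC_dsum hP (dsumC_is_dsum Y) PY.
exact: (closedC_ses hP telescope_ses P_dsum P_dsum).
Qed.

End SequentialColimit.

(* A retract [X] of [Y] is the colimit of [Y --s r--> Y --s r--> ...]. *)
Lemma closedC_retract (R : comPzRingType) (A X Y : chain R) (P : chain R -> Prop) :
  closedC A P -> retract X Y -> P Y -> P X.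
Proof.
move=> hP [s [r rs]] PY.
apply: (@closedC_colim R (fun _ => Y) (fun _ => comp_chainmap s r) X (fun _ => r)) hP _ => //.
- by move=> n k y /=; rewrite rs.
- by move=> k x; exists 0%N, (cmap s k x); rewrite rs.
- by move=> n k y /= ->; rewrite cmap0.
Qed.

Section Truncation.
Variable R : comPzRingType.
Implicit Types X Y T U V : chain R.

Lemma chainmap_factor U V X (a : chainmap U X) (b : chainmap V X) :
  (forall k, injective (cmap b k)) -> (forall k u, exists v, cmap b k v = cmap a k u) ->
  exists c : chainmap U V, forall k u, cmap b k (cmap c k u) = cmap a k u.
Proof.
move=> b_inj b_im; pose c k u := sval (cid (b_im k u)).
have bc k u : cmap b k (c k u) = cmap a k u by apply: (svalP (cid (b_im k u))).
have c_lin k : Rlinear (c k).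
  by move=> al u w; apply: (b_inj k); rewrite bc cmapD cmapZ cmapD cmapZ !bc.
have c_comm k u : c k (cd U k u) = cd V k (c k.+1 u).
  by apply: (b_inj k); rewrite bc cmap_comm -bc cmap_comm.
by exists (@ChainMap R U V c c_lin c_comm).
Qed.

Definition concentrated_mod (M : lmodType R) (n : nat) : lmodType R :=
  if n is 0 then M else zmod0 R.

Definition concentrated (M : lmodType R) : chain R :=
  @Chain R (concentrated_mod M) (fun n _ => 0) (fun n => @lin_zero _ _ _) (fun n x => erefl).

Definition unshift_d X n (x : cmod X n.+2) : cmod X n.+1 := - cd X n.+1 x.

Lemma unshift_d_lin X n : Rlinear (@unshift_d X n).
Proof. by move=> a u v; rewrite /unshift_d cdD cdZ opprD scalerN. Qed.

Lemma unshift_dd X n x : @unshift_d X n (@unshift_d X n.+1 x) = 0.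
Proof. by rewrite /unshift_d cdN opprK cd_dd. Qed.

Definition unshift X : chain R :=
  @Chain R (fun n => cmod X n.+1) (@unshift_d X) (@unshift_d_lin X) (@unshift_dd X).

Definition concentrated_incl X : chainmap (concentrated (cmod X 0)) X.
Proof.
refine (@ChainMap R (concentrated (cmod X 0)) X
  (fun n => if n is 0 return cmod (concentrated (cmod X 0)) n -> cmod X n
            then fun x => x else fun _ => 0) _ _).
- by case=> [|n] a u v //; rewrite scaler0 addr0.
- by case=> [|n] x /=; rewrite cd0.
Defined.

Section Attach.
Variables (X T : chain R) (i : chainmap T (unshift X)).

Definition attach_map : chainmap T (concentrated (cmod X 0)).
Proof.
refine (@ChainMap R T (concentrated (cmod X 0))
  (fun n => if n is 0 return cmod T n -> cmod (concentrated (cmod X 0)) n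
            then fun t => cd X 0 (cmap i 0 t) else fun _ => 0) _ _).
- case=> [|n] a u v /=; last by rewrite scaler0 addr0.
  by rewrite cmapD cmapZ cdD cdZ.
- by case=> [|n] x //=; rewrite cmap_comm /= /unshift_d cdN cd_dd oppr0.
Defined.

Definition attach_incl : chainmap (cone attach_map) X.
Proof.
refine (@ChainMap R (cone attach_map) X
  (fun n => if n is k.+1 return cmod (cone attach_map) n -> cmod X n
            then fun x => cmap i k x.2 else fun x => x.1) _ _).
- by case=> [|n] a u v //=; rewrite cmapD cmapZ.
- case=> [|n] x /=; first by rewrite add0r.
  by rewrite cmapN cmap_comm /= /unshift_d opprK.
Defined.

End Attach.

(* [skeleton n X] is the brutal truncation of [X] in degrees [<= n], obtained by attaching
   [X_0] in degree 0 to the shifted truncation of [unshift X] along the differential. *)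
Fixpoint skeleton (n : nat) : forall X : chain R, {T : chain R & chainmap T X} :=
  if n is m.+1 then fun X =>
    let s := skeleton m (unshift X) in existT _ (cone (attach_map (projT2 s))) (attach_incl _)
  else fun X => existT _ (concentrated (cmod X 0)) (concentrated_incl X).

Lemma skeleton_inj n : forall X k, injective (cmap (projT2 (skeleton n X)) k).
Proof.
elim: n => [|n IH] X [|k] /=.
- by move=> x y.
- by move=> x y _; rewrite (zmod0_eq0 x) (zmod0_eq0 y).
- by move=> [x1 x2] [y1 y2] /= ->; rewrite (zmod0_eq0 x2) (zmod0_eq0 y2).
- move=> [x1 x2] [y1 y2] /= e; rewrite (zmod0_eq0 x1) (zmod0_eq0 y1).
  by congr pair; apply: (IH (unshift X) k).
Qed.

Lemma skeleton_surj n : forall X k (x : cmod X k), (k <= n)%N ->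
  exists t, cmap (projT2 (skeleton n X)) k t = x.
Proof.
elim: n => [|n IH] X [|k] x //= kn.
- by exists x.
- by exists (x, 0).
- by have [t <-] := IH (unshift X) k x kn; exists (0, t).
Qed.

Lemma skeleton_zero n : forall X k t, (n < k)%N -> cmap (projT2 (skeleton n X)) k t = 0.
Proof. by elim: n => [|n IH] X [|k] t //= nk; apply: (IH (unshift X) k t.2 nk). Qed.

Lemma skeleton_succ n X k (t : cmod (projT1 (skeleton n X)) k) :
  exists t', cmap (projT2 (skeleton n.+1 X)) k t' = cmap (projT2 (skeleton n X)) k t.
Proof.
case: (leqP k n.+1) => kn; first exact: skeleton_surj.
by exists 0; rewrite cmap0 skeleton_zero // ltnW.
Qed.

Section ConcentratedClosure.
Variables (A : chain R) (P : chain R -> Prop) (hP : closedC A P).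

Lemma closedC_skeleton n : forall X, (forall k, P (concentrated (cmod X k))) ->
  P (projT1 (skeleton n X)).
Proof.
by elim: n => [|n IH] X PX //=; apply: (closedC_cone hP); [apply: IH => k; apply: PX|].
Qed.

(* [X] is the colimit of its skeleta. *)
Lemma closedC_of_concentrated X : (forall k, P (concentrated (cmod X k))) -> P X.
Proof.
move=> PX; pose psi n : chainmap _ X := projT2 (skeleton n X).
have phi_ex n : exists phi : chainmap _ (projT1 (skeleton n.+1 X)),
    forall k u, cmap (psi n.+1) k (cmap phi k u) = cmap (psi n) k u.
  by apply: chainmap_factor; [apply: skeleton_inj | apply: skeleton_succ].
pose phi n := sval (cid (phi_ex n)).
apply: (@closedC_colim R _ phi X psi _ _ _ A) hP _.
- by move=> n; apply: (svalP (cid (phi_ex n))).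
- by move=> k x; have [t <-] := @skeleton_surj k X k x (leqnn k); exists k, t.
- move=> n k y; rewrite -(cmap0 (psi n) k) => /skeleton_inj ->.
  by rewrite cmap0.
- by move=> n; apply: closedC_skeleton.
Qed.

End ConcentratedClosure.
End Truncation.

Section FreeResolution.
Variable R : comPzRingType.

Definition free (T : Type) : lmodType R := dsum (fun _ : T => (R^o : lmodType R)).

Definition free_basis (T : Type) (t : T) : free T :=
  @dsum_in R T (fun _ => (R^o : lmodType R)) t 1.

Definition free_is_dsumS0 (T : Type) :
  chainmap (dsumC (fun _ : T => S0 R)) (concentrated (free T)).
Proof.
refine (@ChainMap R (dsumC (fun _ : T => S0 R)) (concentrated (free T))
  (fun n => if n is 0 return cmod (dsumC (fun _ : T => S0 R)) n -> cmod (concentrated (free T)) n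
            then fun u => u else fun _ => 0) _ _).
- by case=> [|n] a u v //; rewrite scaler0 addr0.
- by case=> [|n] x //=; apply: dsum_eq.
Defined.

Lemma closedC_free (P : chain R -> Prop) : closedC (S0 R) P ->
  forall T : Type, P (concentrated (free T)).
Proof.
move=> hP T; apply/(closedC_bij hP (f := free_is_dsumS0 T)).
  split=> -[|n] x //=; last by exists 0; rewrite (zmod0_eq0 x).
  - by move=> y _; apply: dsum_eq => i; rewrite (zmod0_eq0 (dcomp x i)) (zmod0_eq0 (dcomp y i)).
  - by exists x.
by apply: (closedC_dsum hP (dsumC_is_dsum _)) => _; apply: closedC_base hP.
Qed.

Section Resolution.
Variable M : lmodType R.

Fixpoint resolution_mod (k : nat) : lmodType R :=
  if k is k'.+1 then free (resolution_mod k') else M.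

Lemma scale_lin (V : lmodType R) (y : V) : Rlinear (fun r : R^o => r *: y).
Proof. by move=> a u v; rewrite scalerDl scalerA. Qed.

(* The basis of [resolution_mod k.+1] is indexed by all of [resolution_mod k]; the basis
   vectors outside the kernel of [resolution_d k] are killed, which makes the sequence exact. *)
Fixpoint resolution_d (k : nat) : resolution_mod k.+1 -> resolution_mod k :=
  if k is k'.+1 return resolution_mod k.+1 -> resolution_mod k then
    dsum_out (fun (x : resolution_mod k'.+1) (r : R^o) =>
      r *: (if `[< @resolution_d k' x = 0 >] then x else 0))
  else dsum_out (fun (m : M) (r : R^o) => r *: m).
Arguments resolution_d k _ : clear implicits.

Lemma resolution_d_lin k : Rlinear (resolution_d k).
Proof. by case: k => [|k] /=; apply: dsum_out_lin => i; apply: scale_lin. Qed.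

Lemma resolution_d_basis k (x : resolution_mod k.+1) :
  resolution_d k.+1 (free_basis x) = if `[< resolution_d k x = 0 >] then x else 0.
Proof. by rewrite /= dsum_out_in ?scale1r // => i; apply: scale_lin. Qed.

Lemma resolution_d0_basis (m : M) : resolution_d 0 (free_basis m) = m.
Proof. by rewrite /= dsum_out_in ?scale1r // => i; apply: scale_lin. Qed.

Lemma resolution_dd k (u : resolution_mod k.+2) :
  resolution_d k (resolution_d k.+1 u) = 0.
Proof.
have d_lin := @resolution_d_lin k; have us := @dcomp_notin_dsupp _ _ _ u.
rewrite /= (dsum_outE _ (dsupp_uniq u) us); last by move=> i; apply: scale_lin.
rewrite (lin_sum d_lin) big1 // => i _; rewrite (linZ d_lin).
by case: asboolP => [->|_]; rewrite ?(lin0 d_lin) scaler0.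
Qed.

Lemma resolution_exact k (x : resolution_mod k.+1) :
  resolution_d k x = 0 -> exists y, resolution_d k.+1 y = x.
Proof. by move=> dx; exists (free_basis x); rewrite resolution_d_basis; case: asboolP. Qed.

Definition resolution : chain R :=
  @Chain R (fun n => resolution_mod n.+1) (fun n => resolution_d n.+1)
    (fun n => @resolution_d_lin n.+1) (fun n x => resolution_dd x).

Definition augmentation : chainmap resolution (concentrated M).
Proof.
refine (@ChainMap R resolution (concentrated M)
  (fun n => if n is 0 return cmod resolution n -> cmod (concentrated M) n
            then resolution_d 0 else fun _ => 0) _ _).
- by case=> [|n] a u v /=; [apply: (@resolution_d_lin 0) | rewrite scaler0 addr0].
- by case=> [|n] x //; apply: (@resolution_dd 0 x).
Defined.

Lemma augmentation_weq : weq augmentation.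
Proof.
case=> [|n]; split.
- by move=> x _ [y dy]; apply: resolution_exact; apply: esym dy.
- move=> m _; exists (free_basis m); split=> //.
  have -> : cmap augmentation 0 (free_basis m) = m := resolution_d0_basis m.
  by rewrite subrr; apply: boundary0.
- by move=> x dx _; apply: resolution_exact.
- move=> y _; exists 0; split; first exact: cycle0.
  by rewrite (zmod0_eq0 (_ - _)); apply: boundary0.
Qed.

End Resolution.

Lemma cellular_S0 (X : chain R) : cellular X (S0 R).
Proof.
move=> P hP; apply: (closedC_of_concentrated hP) => k.
apply/(closedC_weq hP (augmentation_weq (cmod X k))).
by apply: (closedC_of_concentrated hP) => j; apply: closedC_free.
Qed.

End FreeResolution.

Section PropSubmodule.
Variables (R : comPzRingType) (V : lmodType R) (S : V -> Prop).
Hypotheses (S0 : S 0) (SD : forall x y, S x -> S y -> S (x + y))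
           (SZ : forall a x, S x -> S (a *: x)).

Record psub := PSub { psub_val : V ; psub_proof : S psub_val }.

Lemma psub_eq (u v : psub) : psub_val u = psub_val v -> u = v.
Proof. by case: u v => [u su] [v sv] /= e; subst v; rewrite (Prop_irrelevance su sv). Qed.

HB.instance Definition _ := gen_eqMixin psub.
HB.instance Definition _ := gen_choiceMixin psub.

Lemma SN x : S x -> S (- x). Proof. by rewrite -scaleN1r; apply: SZ. Qed.

Definition psub_zero := PSub S0.
Definition psub_add u v := PSub (SD (psub_proof u) (psub_proof v)).
Definition psub_opp u := PSub (SN (psub_proof u)).
Definition psub_scale a u := PSub (SZ a (psub_proof u)).

Lemma psub_addA : associative psub_add.
Proof. by move=> u v w; apply: psub_eq; rewrite /= addrA. Qed.
Lemma psub_addC : commutative psub_add.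
Proof. by move=> u v; apply: psub_eq; rewrite /= addrC. Qed.
Lemma psub_add0 : left_id psub_zero psub_add.
Proof. by move=> u; apply: psub_eq; rewrite /= add0r. Qed.
Lemma psub_addN : left_inverse psub_zero psub_opp psub_add.
Proof. by move=> u; apply: psub_eq; rewrite /= addNr. Qed.
HB.instance Definition _ := GRing.isZmodule.Build psub psub_addA psub_addC psub_add0 psub_addN.

Lemma psub_scaleA a b v : psub_scale a (psub_scale b v) = psub_scale (a * b) v.
Proof. by apply: psub_eq; rewrite /= scalerA. Qed.
Lemma psub_scale1 : left_id 1 psub_scale.
Proof. by move=> u; apply: psub_eq; rewrite /= scale1r. Qed.
Lemma psub_scaleDr : right_distributive psub_scale +%R.
Proof. by move=> a u v; apply: psub_eq; rewrite /= scalerDr. Qed.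
Lemma psub_scaleDl v : {morph psub_scale^~ v: a b / a + b}.
Proof. by move=> a b; apply: psub_eq; rewrite /= scalerDl. Qed.
HB.instance Definition _ := GRing.Zmodule_isLmodule.Build R psub
  psub_scaleA psub_scale1 psub_scaleDr psub_scaleDl.

Definition psubmod : lmodType R := psub.

End PropSubmodule.

Section Lifting.
Variable R : comPzRingType.

Lemma projective_lift_image (P : lmodType R) (M N : lmodType R) (D : M -> N) (phi : P -> N) :
  projective P -> Rlinear D -> Rlinear phi -> (forall p, exists m, D m = phi p) ->
  exists psi : P -> M, Rlinear psi /\ forall p, D (psi p) = phi p.
Proof.
move=> P_proj D_lin phi_lin phi_im; pose S y := exists m, D m = y.
have S0 : S 0 by exists 0; apply: lin0 D_lin.
have SD x y : S x -> S y -> S (x + y) by move=> [a <-] [b <-]; exists (a + b); rewrite (linD D_lin).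
have SZ a x : S x -> S (a *: x) by move=> [b <-]; exists (a *: b); rewrite (linZ D_lin).
pose D' (m : M) : psubmod S0 SD SZ := PSub (ex_intro (fun m' => D m' = D m) m erefl).
pose phi' (p : P) : psubmod S0 SD SZ := PSub (phi_im p).
have D'_lin : Rlinear D' by move=> a u v; apply: psub_eq; rewrite /= D_lin.
have phi'_lin : Rlinear phi' by move=> a u v; apply: psub_eq; rewrite /= phi_lin.
have [|psi [psi_lin D'psi]] := P_proj _ _ D' phi' D'_lin phi'_lin.
  by move=> [y [m my]]; exists m; apply: psub_eq.
by exists psi; split=> // p; apply: (congr1 (@psub_val _ _ _) (D'psi p)).
Qed.

Section LiftAlongWeq.
Variables (A X Y : chain R) (A_cof : cofibrant A) (f : chainmap X Y) (f_weq : weq f).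
Variable g : chainmap A Y.

(* A lift [l] of [g] through [f] in degrees [<= n], together with a homotopy [h] from
   [f l] to [g]; only its restriction to [n]-boundaries is needed to go on. *)
Definition partial_lift n (l : cmod A n -> cmod X n) (h : cmod A n -> cmod Y n.+1) : Prop :=
  [/\ Rlinear l, Rlinear h, (forall a : cmod A n.+1, is_cycle (l (cd A n a))) &
      forall a : cmod A n.+1, cmap f n (l (cd A n a)) = cd Y n (cmap g n.+1 a + h (cd A n a))].

Lemma partial_lift_succ n l h : partial_lift l h ->
  exists p : (cmod A n.+1 -> cmod X n.+1) * (cmod A n.+1 -> cmod Y n.+2),
    partial_lift p.1 p.2 /\ forall a, cd X n (p.1 a) = l (cd A n a).
Proof.
case=> l_lin h_lin l_cycle l_htpy.
pose D (m : cmod X n.+1 * cmod Y n.+2) : cmod X n * cmod Y n.+1 :=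
  (cd X n m.1, cmap f n.+1 m.1 - cd Y n.+1 m.2).
pose phi (a : cmod A n.+1) : cmod X n * cmod Y n.+1 :=
  (l (cd A n a), cmap g n.+1 a + h (cd A n a)).
have D_lin : Rlinear D.
  move=> a [u1 u2] [v1 v2]; rewrite /D /= pairZ pairD cdD cdZ cmapD cmapZ cdD cdZ.
  congr pair; rewrite scalerBr opprD -!addrA; congr (_ + _).
  by rewrite addrCA; congr (_ + _); rewrite addrC.
have phi_lin : Rlinear phi.
  move=> a u v; rewrite /phi pairZ pairD cdD cdZ l_lin cmapD cmapZ h_lin; congr pair.
  by rewrite scalerDr -!addrA; congr (_ + _); rewrite addrCA; congr (_ + _); rewrite addrC.
have phi_im a : exists m, D m = phi a.
  have [x dx] : is_boundary (l (cd A n a)).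
    by apply: (proj1 (f_weq n)) => //; rewrite l_htpy; apply: boundary_cd.
  set v := cmap g n.+1 a + h (cd A n a) in l_htpy *.
  have fx_cycle : is_cycle (cmap f n.+1 x - v).
    by rewrite /= cdB -cmap_comm dx l_htpy subrr.
  have [x' [dx' [w dw]]] := proj2 (f_weq n.+1) _ fx_cycle.
  exists (x - x', - w); rewrite /D /phi /=; congr pair; first by rewrite cdB dx' subr0.
  by rewrite cdN opprK dw cmapB addrA subrK opprB addrC subrK.
have [psi [psi_lin Dpsi]] := projective_lift_image (@A_cof n.+1) D_lin phi_lin phi_im.
have dpsi b : cd X n (psi b).1 = l (cd A n b) := congr1 fst (Dpsi b).
have fpsi b : cmap f n.+1 (psi b).1 - cd Y n.+1 (psi b).2 = cmap g n.+1 b + h (cd A n b).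
  by have /(congr1 snd) := Dpsi b.
exists (fun a => (psi a).1, fun a => (psi a).2); split=> //; split=> /=.
- by move=> al u v; rewrite psi_lin.
- by move=> al u v; rewrite psi_lin.
- by move=> a; rewrite /= dpsi cd_dd (lin0 l_lin).
- move=> a; move/eqP: (fpsi (cd A n.+1 a)); rewrite cd_dd (lin0 h_lin) addr0 subr_eq.
  by move=> /eqP ->; rewrite cmap_comm cdD addrC.
Qed.

Lemma partial_lift0 : exists p : (cmod A 0 -> cmod X 0) * (cmod A 0 -> cmod Y 1),
  partial_lift p.1 p.2 /\ forall a, cmap f 0 (p.1 a) - cmap g 0 a = cd Y 0 (p.2 a).
Proof.
pose D (m : cmod X 0 * cmod Y 1) : cmod Y 0 := cmap f 0 m.1 - cd Y 0 m.2.
have D_lin : Rlinear D.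
  move=> a [u1 u2] [v1 v2]; rewrite /D /= cdD cdZ cmapD cmapZ.
  rewrite scalerBr opprD -!addrA; congr (_ + _).
  by rewrite addrCA; congr (_ + _); rewrite addrC.
have g_im a : exists m, D m = cmap g 0 a.
  have [x [_ [w dw]]] := proj2 (f_weq 0) (cmap g 0 a) I.
  by exists (x, w); rewrite /D /= dw opprB addrC subrK.
have [psi [psi_lin Dpsi]] := projective_lift_image (@A_cof 0) D_lin (cmap_lin _ _ _ g 0) g_im.
have htpy a : cmap f 0 (psi a).1 - cmap g 0 a = cd Y 0 (psi a).2.
  by rewrite -Dpsi /D opprB addrC subrK.
exists (fun a => (psi a).1, fun a => (psi a).2); split=> //; split=> //=.
- by move=> al u v; rewrite psi_lin.
- by move=> al u v; rewrite psi_lin.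
- by move=> a; move/eqP: (htpy (cd A 0 a)); rewrite subr_eq => /eqP ->; rewrite cmap_comm cdD addrC.
Qed.

Fixpoint lift_seq n :
    {p : (cmod A n -> cmod X n) * (cmod A n -> cmod Y n.+1) | partial_lift p.1 p.2} :=
  if n is m.+1 then
    let s := cid (partial_lift_succ (svalP (lift_seq m))) in exist _ (sval s) (proj1 (svalP s))
  else let s := cid partial_lift0 in exist _ (sval s) (proj1 (svalP s)).

Lemma lift_along_weq : exists l : chainmap A X,
  forall a : cmod A 0, is_boundary (cmap f 0 (cmap l 0 a) - cmap g 0 a).
Proof.
pose l n := (sval (lift_seq n)).1.
have l_lin n : Rlinear (l n) by case: (svalP (lift_seq n)).
have l_comm n a : l n (cd A n a) = cd X n (l n.+1 a).
  exact: esym (proj2 (svalP (cid (partial_lift_succ (svalP (lift_seq n))))) a).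
exists (@ChainMap R A X l l_lin l_comm) => a /=.
by rewrite /l /= (proj2 (svalP (cid partial_lift0)) a); apply: boundary_cd.
Qed.

End LiftAlongWeq.
End Lifting.

Section GeneratedH0.
Variables (R : comPzRingType) (A : chain R).

Definition term (X : chain R) := {g : chainmap A X & cmod A 0}.

Definition eval_terms X (l : seq (term X)) : cmod X 0 :=
  \sum_(p <- l) cmap (projT1 p) 0 (projT2 p).

Definition push_terms X Z (h : chainmap X Z) (l : seq (term X)) : seq (term Z) :=
  map (fun p : term X => existT (fun _ => cmod A 0) (comp_chainmap h (projT1 p)) (projT2 p)) l.

Lemma eval_push_terms X Z (h : chainmap X Z) l :
  eval_terms (push_terms h l) = cmap h 0 (eval_terms l).
Proof. by rewrite /eval_terms /push_terms big_map cmap_sum. Qed.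

Lemma eval_terms_cat X (l1 l2 : seq (term X)) :
  eval_terms (l1 ++ l2) = eval_terms l1 + eval_terms l2.
Proof. by rewrite /eval_terms big_cat. Qed.

(* [H_0(X)] is generated by the images of [H_0(A)] under chain maps [A -> X]. *)
Definition H0_generated (X : chain R) : Prop :=
  forall y : cmod X 0, exists l, is_boundary (y - eval_terms l).

Lemma H0_generated_base : H0_generated A.
Proof.
move=> y; exists [:: existT _ (id_chainmap A) y].
by rewrite /eval_terms big_seq1 /= subrr; apply: boundary0.
Qed.

Lemma H0_generated_dsum (I : Type) (X : I -> chain R) Y (iota : forall i, chainmap (X i) Y) :
  is_dsum iota -> (forall i, H0_generated (X i)) -> H0_generated Y.
Proof.
move=> Y_dsum X_gen y; have [phi [[_ phi_surj] phi_in]] := is_dsum_iso Y_dsum.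
have [u <-] := phi_surj 0 y.
have sum_gen (s : seq {classic I}) : exists l,
    is_boundary (\sum_(i <- s) cmap (iota i) 0 (dcomp u i) - eval_terms l).
  elim: s => [|i s [l' bl']].
    by exists [::]; rewrite big_nil /eval_terms big_nil subrr; apply: boundary0.
  have [li bli] := X_gen i (dcomp u i).
  exists (push_terms (iota i) li ++ l'); rewrite big_cons eval_terms_cat eval_push_terms.
  rewrite opprD addrACA -cmapB; apply: boundaryD bl'.
  exact: boundary_cmap.
have [l bl] := sum_gen (dsupp u); exists l.
rewrite {1}(dsum_decomp (dsupp_uniq u) (@dcomp_notin_dsupp _ _ _ u)) cmap_sum.
by under eq_bigr => i _ do rewrite phi_in.
Qed.

Lemma H0_generated_weq X Y (f : chainmap X Y) : weq f -> H0_generated X -> H0_generated Y.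
Proof.
move=> f_weq X_gen y; have [x [_ bx]] := proj2 (f_weq 0) y I.
have [l bl] := X_gen x; exists (push_terms f l); rewrite eval_push_terms.
have -> : y - cmap f 0 (eval_terms l) = cmap f 0 (x - eval_terms l) - (cmap f 0 x - y).
  by rewrite cmapB [RHS]addrC opprB addrA subrK.
by apply: boundaryB bx; apply: boundary_cmap.
Qed.

Lemma H0_generated_weqV X Y (f : chainmap X Y) : cofibrant A -> weq f ->
  H0_generated Y -> H0_generated X.
Proof.
move=> A_cof f_weq Y_gen x; have [l bl] := Y_gen (cmap f 0 x).
have lift (k : seq (term Y)) : exists l', is_boundary (cmap f 0 (eval_terms l') - eval_terms k).
  elim: k => [|[g a] k [l' bl']].
    by exists [::]; rewrite /eval_terms !big_nil cmap0 subrr; apply: boundary0.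
  have [g' bg'] := lift_along_weq A_cof f_weq g.
  exists (existT _ g' a :: l'); rewrite /eval_terms !big_cons /= cmapD opprD addrACA.
  exact: boundaryD.
have [l' bl'] := lift l; exists l'; apply: (proj1 (f_weq 0)) => //.
have -> : cmap f 0 (x - eval_terms l')
          = (cmap f 0 x - eval_terms l) - (cmap f 0 (eval_terms l') - eval_terms l).
  by rewrite cmapB opprB addrA subrK.
exact: boundaryB.
Qed.

Lemma H0_generated_ses X1 X2 X3 (i : chainmap X1 X2) (p : chainmap X2 X3) :
  ses i p -> H0_generated X2 -> H0_generated X3.
Proof.
move=> ip_ses X2_gen y; have [y2 <-] := proj1 (proj2 (ip_ses 0)) y.
have [l bl] := X2_gen y2; exists (push_terms p l).
by rewrite eval_push_terms -cmapB; apply: boundary_cmap.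
Qed.

Lemma closedC_H0_generated : cofibrant A -> closedC A H0_generated.
Proof.
move=> A_cof; split; first exact: H0_generated_base.
split; first exact: H0_generated_dsum.
split=> [X Y f f_weq|]; last by move=> *; apply: H0_generated_ses; eassumption.
by split; [apply: H0_generated_weq | apply: H0_generated_weqV].
Qed.

Lemma cellular_H0_surj (X : chain R) : cofibrant A -> cellular X A ->
  exists (I : Type) (Y : chain R) (iota : forall i : I, chainmap A Y),
    is_dsum iota /\ exists f : chainmap Y X, Hsurj f 0.
Proof.
move=> A_cof X_cell; have X_gen := X_cell _ (closedC_H0_generated A_cof).
pose J := chainmap A X; exists J, (dsumC (fun _ : J => A)), (dsumC_in (fun _ : J => A)).
split; first exact: dsumC_is_dsum.
exists (dsumC_out (fun g : J => g)) => y _; have [l bl] := X_gen y.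
exists (\sum_(q <- l) cmap (dsumC_in (fun _ : J => A) (projT1 q)) 0 (projT2 q)); split=> //.
rewrite cmap_sum (eq_bigr (fun q => cmap (projT1 q) 0 (projT2 q))) => [|q _].
  by rewrite -opprB; apply: boundaryN.
exact: dsumC_out_in.
Qed.

End GeneratedH0.

Section Suspension.
Variable R : comPzRingType.
Implicit Types X Y Z A : chain R.

Definition shift_map X Y (f : chainmap X Y) : chainmap (shift X) (shift Y).
Proof.
refine (@ChainMap R (shift X) (shift Y)
  (fun n => if n is k.+1 return cmod (shift X) n -> cmod (shift Y) n
            then cmap f k else fun _ => 0) _ _).
- by case=> [|n] a u v /=; [rewrite scaler0 addr0 | apply: cmap_lin].
- by case=> [|n] x //=; rewrite cmapN cmap_comm.
Defined.

Lemma oppr_eq0_iff (V : zmodType) (x : V) : - x = 0 <-> x = 0.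
Proof. by split=> [/eqP|->]; rewrite ?oppr_eq0 ?oppr0 => // /eqP. Qed.

Lemma cycle_shift X k (x : cmod X k) : @is_cycle R (shift X) k.+1 x <-> is_cycle x.
Proof. by case: k x => [|k] x //=; apply: oppr_eq0_iff. Qed.

Lemma boundary_shift X k (x : cmod X k) : @is_boundary R (shift X) k.+1 x <-> is_boundary x.
Proof. by split=> -[y <-]; exists (- y); rewrite /= cdN ?opprK. Qed.

Lemma boundary_shift0 X (x : cmod (shift X) 0) : is_boundary x.
Proof. by rewrite (zmod0_eq0 x); apply: boundary0. Qed.

Lemma shift_weq X Y (f : chainmap X Y) : weq f -> weq (shift_map f).
Proof.
move=> f_weq [|k]; split.
- by move=> x _ _; apply: boundary_shift0.
- by move=> y _; exists 0; split; [apply: cycle0 | apply: boundary_shift0].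
- move=> x /cycle_shift cx /boundary_shift bfx; apply/boundary_shift.
  exact: (proj1 (f_weq k)).
- move=> y /cycle_shift cy; have [x [cx bx]] := proj2 (f_weq k) y cy.
  by exists x; split; [apply/cycle_shift | apply/boundary_shift].
Qed.

Lemma shift_ses X Y Z (i : chainmap X Y) (p : chainmap Y Z) :
  ses i p -> ses (shift_map i) (shift_map p).
Proof.
move=> ip_ses [|k]; last exact: (ip_ses k).
split; first by move=> x y _; rewrite (zmod0_eq0 x) (zmod0_eq0 y).
split; first by move=> z; exists 0; rewrite (zmod0_eq0 z).
by move=> y; split=> _ //; exists 0; rewrite (zmod0_eq0 y).
Qed.

Definition shift_dsumC (I : Type) (X : I -> chain R) :
  chainmap (dsumC (fun i => shift (X i))) (shift (dsumC X)).
Proof.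
refine (@ChainMap R (dsumC (fun i => shift (X i))) (shift (dsumC X))
  (fun n => if n is k.+1 return cmod (dsumC (fun i => shift (X i))) n -> cmod (shift (dsumC X)) n
            then fun u => u else fun _ => 0) _ _).
- by case=> [|n] a u v //=; rewrite scaler0 addr0.
- by case=> [|n] x //=; apply: dsum_eq.
Defined.

Lemma shift_dsumC_bij (I : Type) (X : I -> chain R) : bijective_chainmap (shift_dsumC X).
Proof.
split=> -[|n] x //=; last by exists x.
  by move=> y _; apply: dsum_eq => i; rewrite (zmod0_eq0 (dcomp x i)) (zmod0_eq0 (dcomp y i)).
by exists 0; rewrite (zmod0_eq0 x).
Qed.

Lemma shift_map_bij X Y (f : chainmap X Y) : bijective_chainmap f ->
  bijective_chainmap (shift_map f).
Proof.
move=> [f_inj f_surj]; split=> -[|n] x /=; last exact: f_surj.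
- by move=> y _; rewrite (zmod0_eq0 x) (zmod0_eq0 y).
- exact: f_inj.
- by exists 0; rewrite (zmod0_eq0 x).
Qed.

Lemma cellular_shift A X : cellular X A -> cellular (shift X) (shift A).
Proof.
move=> X_cell P hP; apply: (X_cell (fun Z => P (shift Z))).
split; first exact: closedC_base hP.
split.
  move=> I Xi Y iota Y_dsum PXi; have [phi [phi_bij _]] := is_dsum_iso Y_dsum.
  apply/(closedC_bij hP (shift_map_bij phi_bij))/(closedC_bij hP (shift_dsumC_bij Xi)).
  exact: (closedC_dsum hP (dsumC_is_dsum _)).
split; first by move=> X0 Y0 f /shift_weq /(closedC_weq hP).
by move=> X1 X2 X3 i p /shift_ses /(closedC_ses hP).
Qed.

End Suspension.

Section Desuspension.
Variable R : comPzRingType.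
Implicit Types X Y Z A : chain R.

Section Desusp.
Variable Y : chain R.

Definition cycle1 (v : cmod Y 1) : Prop := cd Y 0 v = 0.

Lemma cycle1_0 : cycle1 0. Proof. exact: cd0. Qed.
Lemma cycle1D x y : cycle1 x -> cycle1 y -> cycle1 (x + y).
Proof. by rewrite /cycle1 cdD => -> ->; rewrite addr0. Qed.
Lemma cycle1Z a x : cycle1 x -> cycle1 (a *: x).
Proof. by rewrite /cycle1 cdZ => ->; rewrite scaler0. Qed.

Definition cycles1 : lmodType R := psubmod cycle1_0 cycle1D cycle1Z.

Definition desusp_mod n : lmodType R := if n is k.+1 then cmod Y k.+2 else cycles1.

Lemma cycle1_cd (y : cmod Y 2) : cycle1 (- cd Y 1 y).
Proof. by rewrite /cycle1 cdN cd_dd oppr0. Qed.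

Definition desusp_d n : desusp_mod n.+1 -> desusp_mod n :=
  if n is k.+1 return desusp_mod n.+1 -> desusp_mod n then fun y => - cd Y k.+2 y
  else fun y => PSub (cycle1_cd y) : cycles1.

Lemma desusp_d_lin n : Rlinear (@desusp_d n).
Proof.
case: n => [|n] a u v /=; last by rewrite cdD cdZ opprD scalerN.
by apply: psub_eq; rewrite /= cdD cdZ opprD scalerN.
Qed.

Lemma desusp_dd n x : @desusp_d n (@desusp_d n.+1 x) = 0.
Proof. by case: n x => [|n] x /=; [apply: psub_eq|]; rewrite /= cdN opprK cd_dd. Qed.

Definition desusp : chain R := @Chain R desusp_mod desusp_d desusp_d_lin desusp_dd.

Lemma cycle_desusp k (x : cmod Y k.+2) : @is_cycle R desusp k.+1 x <-> is_cycle x.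
Proof.
case: k x => [|k] x /=; last exact: oppr_eq0_iff.
split=> [/(congr1 (@psub_val _ _ _)) /= /oppr_eq0_iff //|cx].
by apply: psub_eq; rewrite /= cx oppr0.
Qed.

Lemma boundary_desusp k (x : cmod Y k.+2) : @is_boundary R desusp k.+1 x <-> is_boundary x.
Proof. by split=> -[y <-]; exists (- y); rewrite /= cdN ?opprK. Qed.

Lemma boundary_desusp0 (z : cmod desusp 0) : is_boundary z <-> is_boundary (psub_val z).
Proof.
split=> -[y yz]; exists (- y); first by rewrite cdN -yz.
by apply: psub_eq; rewrite /= cdN opprK.
Qed.

End Desusp.

Lemma cycle1_cmap Y Y' (f : chainmap Y Y') (z : cycles1 Y) : cycle1 (cmap f 1 (psub_val z)).
Proof. by rewrite /cycle1 -cmap_comm (psub_proof z) cmap0. Qed.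

Definition desusp_map Y Y' (f : chainmap Y Y') : chainmap (desusp Y) (desusp Y').
Proof.
refine (@ChainMap R (desusp Y) (desusp Y')
  (fun n => if n is k.+1 return cmod (desusp Y) n -> cmod (desusp Y') n
            then cmap f k.+2 else fun z => PSub (cycle1_cmap f z) : cycles1 Y') _ _).
- by case=> [|n] a u v /=; [apply: psub_eq; rewrite /= cmapD cmapZ | apply: cmap_lin].
- by case=> [|n] x /=; [apply: psub_eq|]; rewrite /= cmapN cmap_comm.
Defined.

Lemma desusp_weq Y Y' (f : chainmap Y Y') : weq f -> weq (desusp_map f).
Proof.
move=> f_weq [|k]; split.
- move=> z _ /boundary_desusp0 bfz; apply/boundary_desusp0.
  exact: (proj1 (f_weq 1) _ (psub_proof z) bfz).
- move=> z' _; have [x [cx bx]] := proj2 (f_weq 1) _ (psub_proof z').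
  by exists (PSub (cx : cycle1 x)); split=> //; apply/boundary_desusp0.
- move=> x /cycle_desusp cx /boundary_desusp bfx; apply/boundary_desusp.
  exact: (proj1 (f_weq k.+2)).
- move=> y /cycle_desusp cy; have [x [cx bx]] := proj2 (f_weq k.+2) y cy.
  by exists x; split; [apply/cycle_desusp | apply/boundary_desusp].
Qed.

Definition H0_trivial Y : Prop := forall y : cmod Y 0, is_boundary y.

(* Surjectivity in degree 0 is where [H_0(X1) = 0] is needed. *)
Lemma desusp_ses X1 X2 X3 (i : chainmap X1 X2) (p : chainmap X2 X3) :
  ses i p -> H0_trivial X1 -> ses (desusp_map i) (desusp_map p).
Proof.
move=> ip_ses X1_H0 [|k]; last exact: (ip_ses k.+2).
have [i_inj [p_surj ip_exact]] := ip_ses 1%N; have [i0_inj [_ ip0_exact]] := ip_ses 0%N.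
split; [|split].
- by move=> z1 z2 /(congr1 (@psub_val _ _ _)) /i_inj e; apply: psub_eq.
- move=> z3; have [y2 py2] := p_surj (psub_val z3).
  have [|x1 ix1] := proj1 (ip0_exact _) (_ : cmap p 0 (cd X2 0 y2) = 0).
    by rewrite cmap_comm py2 (psub_proof z3).
  have [w1 dw1] := X1_H0 x1.
  have cy : cycle1 (y2 - cmap i 1 w1) by rewrite /cycle1 cdB -cmap_comm dw1 ix1 subrr.
  exists (PSub cy); apply: psub_eq => /=.
  by rewrite cmapB py2 (proj2 (ip_exact _) (ex_intro _ w1 erefl)) subr0.
- move=> z2; split=> [/(congr1 (@psub_val _ _ _)) /= /ip_exact [x ix]|[z1 <-]].
    have cx : cycle1 x by apply: i0_inj; rewrite cmap0 cmap_comm ix (psub_proof z2).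
    by exists (PSub cx); apply: psub_eq.
  by apply: psub_eq; apply/(proj2 (ip_exact _)); exists (psub_val z1).
Qed.

Section DesuspDsum.
Variables (I : Type) (Y : I -> chain R).

Lemma finsupp_psub_val (u : cmod (dsumC (fun i => desusp (Y i))) 0) :
  finsupp (fun i => psub_val (dcomp u i)).
Proof. by case: (dcomp_finsupp u) => s su; exists s => i /su ->. Qed.

Lemma cycle1_dsumC (u : cmod (dsumC (fun i => desusp (Y i))) 0) :
  cycle1 (DSum (finsupp_psub_val u) : cmod (dsumC Y) 1).
Proof. by apply: dsum_eq => i; apply: (psub_proof (dcomp u i)). Qed.

Definition desusp_dsumC : chainmap (dsumC (fun i => desusp (Y i))) (desusp (dsumC Y)).
Proof.
refine (@ChainMap R (dsumC (fun i => desusp (Y i))) (desusp (dsumC Y))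
  (fun n => if n is k.+1 return cmod (dsumC (fun i => desusp (Y i))) n -> cmod (desusp (dsumC Y)) n
            then fun u => u else fun u => PSub (cycle1_dsumC u)) _ _).
- by case=> [|n] a u v //=; apply: psub_eq; apply: dsum_eq.
- by case=> [|n] x /=; [apply: psub_eq|]; apply: dsum_eq.
Defined.

Lemma desusp_dsumC_bij : bijective_chainmap desusp_dsumC.
Proof.
split=> -[|n] //=; last by move=> y; exists y.
  move=> x y e; apply: dsum_eq => i; apply: psub_eq.
  by have := congr1 (fun z : cmod (desusp (dsumC Y)) 0 => dcomp (psub_val z) i) e.
move=> y; have cy i : cycle1 (dcomp (psub_val y) i).
  by have := congr1 (fun z : cmod (dsumC Y) 0 => dcomp z i) (psub_proof y).
have fs : finsupp (fun i => PSub (cy i) : cycles1 (Y i)).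
  by case: (dcomp_finsupp (psub_val y)) => s sy; exists s => i /sy yi; apply: psub_eq.
by exists (DSum fs); apply: psub_eq; apply: dsum_eq.
Qed.

End DesuspDsum.

Lemma desusp_map_bij Y Y' (f : chainmap Y Y') : bijective_chainmap f ->
  bijective_chainmap (desusp_map f).
Proof.
move=> [f_inj f_surj]; split=> -[|n] /=; [|exact: f_inj| |exact: f_surj].
  by move=> x y /(congr1 (@psub_val _ _ _)) /f_inj e; apply: psub_eq.
move=> y; have [x fx] := f_surj 1%N (psub_val y).
have cx : cycle1 x by apply: (f_inj 0%N); rewrite cmap0 cmap_comm fx (psub_proof y).
by exists (PSub cx); apply: psub_eq.
Qed.

Definition desusp_shift X : chainmap X (desusp (shift X)).
Proof.
refine (@ChainMap R X (desusp (shift X))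
  (fun n => if n is k.+1 return cmod X n -> cmod (desusp (shift X)) n
            then fun x => x else fun x => PSub (erefl 0 : @cycle1 (shift X) x)) _ _).
- by case=> [|n] a u v //; apply: psub_eq.
- by case=> [|n] x /=; [apply: psub_eq|]; rewrite /= opprK.
Defined.

Lemma desusp_shift_bij X : bijective_chainmap (desusp_shift X).
Proof.
split=> -[|n] //=; last by move=> y; exists y.
  by move=> x y /(congr1 (@psub_val _ _ _)).
by move=> y; exists (psub_val y); apply: psub_eq.
Qed.

Section DesuspClosure.
Variables (A : chain R) (P : chain R -> Prop) (hP : closedC A P).

Lemma closedC_desusp : closedC (shift A) (fun Z => H0_trivial Z /\ P (desusp Z)).
Proof.
split.
  split=> [y|]; first by rewrite (zmod0_eq0 y); apply: boundary0.
  exact/(closedC_bij hP (desusp_shift_bij A))/(closedC_base hP).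
split.
  move=> I Yi Y iota Y_dsum PYi; have [phi [phi_bij phi_in]] := is_dsum_iso Y_dsum.
  split.
    move=> y; have [u <-] := phi_bij.2 0%N y.
    rewrite (dsum_decomp (dsupp_uniq u) (@dcomp_notin_dsupp _ _ _ u)) cmap_sum.
    by apply: boundary_sum => i; rewrite phi_in; apply/boundary_cmap/(PYi i).1.
  apply/(closedC_bij hP (desusp_map_bij phi_bij))/(closedC_bij hP (desusp_dsumC_bij Yi)).
  by apply: (closedC_dsum hP (dsumC_is_dsum _)) => i; apply: (PYi i).2.
split.
  move=> X0 Y0 f f_weq; have PD := closedC_weq hP (desusp_weq f_weq).
  split=> -[H0 PX]; split; [|exact/PD| |exact/PD].
    move=> y; have [x [_ [w dw]]] := proj2 (f_weq 0%N) y I.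
    have -> : y = cmap f 0 x - cd Y0 0 w by rewrite dw opprB addrC subrK.
    by apply: boundaryB; [apply/boundary_cmap/H0 | apply: boundary_cd].
  by move=> y; apply: (proj1 (f_weq 0%N)) => //; apply: H0.
move=> X1 X2 X3 i p ip_ses [H1 PX1] [H2 PX2]; split.
  by move=> y; have [y2 <-] := (ip_ses 0%N).2.1 y; apply/boundary_cmap/H2.
exact: (closedC_ses hP (desusp_ses ip_ses H1)).
Qed.

End DesuspClosure.

Lemma cellular_desusp A X : cellular (shift X) (shift A) -> cellular X A.
Proof.
move=> X_cell P hP; have [_ PX] := X_cell _ (closedC_desusp hP).
exact/(closedC_bij hP (desusp_shift_bij X)).
Qed.

End Desuspension.

Close Scope ring_scope.

Theorem proposition3p2 (R : comPzRingType) :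
  (forall X : chain R, cellular X (S0 R)) /\
  (forall X A : chain R, acyclic X -> cellular X A) /\
  (forall A X Y : chain R, cellular Y A -> retract X Y -> cellular X A) /\
  (forall A X : chain R, cofibrant A -> cellular X A -> H_nonzero A 0 ->
     exists (I : Type) (Y : chain R) (iota : forall i : I, chainmap A Y),
       @is_dsum R I (fun _ : I => A) Y iota /\
       exists f : chainmap Y X, Hsurj f 0) /\
  (forall (A X : chain R) (n : nat), cellular X A -> cellular (shiftn n X) A) /\
  (forall A X : chain R, cellular (shift X) (shift A) <-> cellular X A).
Proof.
split; first exact: cellular_S0.
split; first by move=> X A X_acyc P hP; exact: (closedC_acyclic hP X_acyc).
split; first by move=> A X Y Y_cell XY P hP; exact: (closedC_retract hP XY (Y_cell P hP)).
split; first by move=> A X A_cof X_cell _; apply: cellular_H0_surj.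
split; first by move=> A X n X_cell P hP; exact: (closedC_shiftn hP n (X_cell P hP)).
by move=> A X; split; [apply: cellular_desusp | apply: cellular_shift].
Qed.
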